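(* Let $m\ge 3$, let $M$ be a set of $m$ parties and $p\ge 0$ an integer, and let $|\Psi\rangle=|\Psi_m^+\rangle^{\otimes p}$, where each party holds one qubit of each copy. Then $\max_{\rho\in\Gamma(\Psi)}S(\rho)=p$, where $\Gamma(\Psi)$ is the set of density operators $\rho$ on the $mp$ qubits with $\mathrm{Tr}_\alpha\rho=\mathrm{Tr}_\alpha|\Psi\rangle\langle\Psi|$ for every party $\alpha\in M$, and $S(\rho)=-\mathrm{Tr}\,\rho\log_2\rho$.
   Context: $|\Psi_m^+\rangle=\frac{1}{\sqrt2}(|0\rangle^{\otimes m}+|1\rangle^{\otimes m})$ is the $m$-qubit GHZ state. $\mathrm{Tr}_\alpha$ denotes the partial trace over all qubits held by party $\alpha$ (here, $p$ qubits). *)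

From HB Require Import structures.
From mathcomp Require Import all_boot all_order all_algebra.
From mathcomp Require Import spectral.
From mathcomp.real_closed Require Import complex.
From mathcomp Require Import reals exp.

Set Implicit Arguments.
Unset Strict Implicit.
Unset Printing Implicit Defensive.

Import Order.TTheory GRing.Theory Num.Theory.
Local Open Scope ring_scope.

(* A computational basis state of the m*p qubits: party a holds the p qubits
   x a j (j-th qubit = its qubit of the j-th GHZ copy). *)
Definition config (m p : nat) := {ffun 'I_m -> {ffun 'I_p -> bool}}.

(* Hilbert space dimension 2^(m p) = #|config m p|; operators are square
   matrices indexed through enum_rank. *)
Definition qdim (m p : nat) := #|config m p|.

Definition entry (R : realType) (m p : nat) (A : 'M[R[i]]_(qdim m p))
  (x y : config m p) : R[i] := A (enum_rank x) (enum_rank y).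

Definition is_density (R : realType) (n : nat) (rho : 'M[R[i]]_n) : Prop :=
  [/\ map_mx Num.conj (rho^T) = rho,
      (forall v : 'rV[R[i]]_n, 0 <= (v *m rho *m (map_mx Num.conj v^T)) 0 0)
    & \tr rho = 1].

Definition setparty (m p : nat) (x : config m p) (a : 'I_m)
  (z : {ffun 'I_p -> bool}) : config m p :=
  [ffun b => if b == a then z else x b].

(* matrix entries of the partial trace Tr_a A over the p qubits of party a,
   between the basis states of the remaining qubits given by x and y
   (party a's part of x, y is ignored). *)
Definition ptrace_party (R : realType) (m p : nat) (a : 'I_m)
  (A : 'M[R[i]]_(qdim m p)) (x y : config m p) : R[i] :=
  \sum_(z : {ffun 'I_p -> bool}) entry A (setparty x a z) (setparty y a z).

(* amplitude of |Psi_m^+>^{(x) p}: for each copy j, the qubits of all parties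
   must agree; amplitude (1/sqrt 2)^p on such basis states *)
Definition ghz_amp (R : realType) (m p : nat) (x : config m p) : R[i] :=
  if [forall j : 'I_p, forall a : 'I_m, forall b : 'I_m, x a j == x b j]
  then ((Num.sqrt (2 : R))^-1 ^+ p)%:C%C else 0.

Definition ghz_proj (R : realType) (m p : nat) : 'M[R[i]]_(qdim m p) :=
  \matrix_(i < qdim m p, j < qdim m p)
    (@ghz_amp R m p (enum_val i) * Num.conj (@ghz_amp R m p (enum_val j))).

Definition Gamma (R : realType) (m p : nat) (rho : 'M[R[i]]_(qdim m p)) : Prop :=
  is_density rho /\
  forall (a : 'I_m) (x y : config m p),
    ptrace_party a rho x y = ptrace_party a (ghz_proj R m p) x y.

(* t log2 t with the convention 0 log 0 = 0 *)
Definition xlog2 (R : realType) (t : R) : R :=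
  if t == 0 then 0 else t * ln t / ln 2.

(* von Neumann entropy S(rho) = - Tr rho log2 rho = - sum_i l_i log2 l_i,
   where the l_i are the eigenvalues (with multiplicity) of the Hermitian rho,
   given by the spectral decomposition rho = U^-1 diag(l) U of spectral.v *)
Definition vn_entropy (R : realType) (n : nat) (rho : 'M[R[i]]_n) : R :=
  - \sum_(k < n) xlog2 (complex.Re (spectral_diag rho 0 k)).

(* Since m >= 3, a basis string that is not of GHZ form (the parties disagree
   on some copy j, say parties a and b) stays non-GHZ after the qubits of a
   third party c are replaced arbitrarily.  The GHZ marginal Tr_c therefore
   vanishes on its diagonal entry, which is a sum of diagonal entries of rho;
   positivity makes each of them, hence the whole row and column of rho at
   that string, vanish.  So every rho in Gamma lives on the 2^p GHZ strings,
   has rank at most 2^p, and its entropy is at most log2 2^p = p.  The bound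
   is attained by the dephased state 2^-p sum_z |z..z><z..z|, which has the
   same one-party marginals as the GHZ state. *)
From HB Require Import structures.
From mathcomp Require Import all_boot all_order all_algebra.
From mathcomp Require Import spectral.
From mathcomp.real_closed Require Import complex.
From mathcomp Require Import reals exp.
From mathcomp Require Import ring lra zify.

Set Implicit Arguments.
Unset Strict Implicit.
Unset Printing Implicit Defensive.

Import Order.TTheory GRing.Theory Num.Theory.
Local Open Scope ring_scope.

Section EntropyBound.
Variable R : realType.

Lemma ln_le_sub1 (x : R) : 0 < x -> ln x <= x - 1.
Proof.
move=> x0; have := @le_ln1Dx R (x - 1).
by rewrite [1 + _]addrC subrK; apply; rewrite ltrBrDr addNr.
Qed.

(* Gibbs' inequality term by term against the uniform weight c^-1. *)
Lemma xlog2_ge (c t : R) : 0 < c -> 0 <= t ->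
  - xlog2 t * ln 2 <= t * ln c + (if t == 0 then 0 else c^-1) - t.
Proof.
move=> c0 t0; rewrite /xlog2; have [->|tn0] := eqVneq t 0.
  by rewrite oppr0 !mul0r add0r addr0.
have tp : 0 < t by rewrite lt_neqAle eq_sym tn0.
rewrite mulNr divfK ?gt_eqF ?ln_gt0 ?ltr1n //.
have := ln_le_sub1 (divr_gt0 (@ltr01 R) (mulr_gt0 c0 tp)).
rewrite div1r lnV ?posrE ?mulr_gt0 // lnM ?posrE // => /(ler_wpM2l (ltW tp)).
rewrite mulrBr mulr1 invfM mulrCA mulfV ?gt_eqF // mulr1.
lra.
Qed.

Lemma entropy_le_log2_support n (l : 'I_n -> R) (N : nat) :
  (forall k, 0 <= l k) -> \sum_k l k = 1 ->
  (#|[pred k | l k != 0%R]| <= 2 ^ N)%N ->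
  - \sum_k xlog2 (l k) <= N%:R.
Proof.
move=> l_ge0 l_sum supp_le; set K := #|[pred k | l k != 0]|.
have K_gt0 : (0 < K)%N.
  rewrite lt0n; apply/eqP => /card0_eq supp0; move: l_sum.
  rewrite big1 => [/eqP|k _]; first by rewrite eq_sym oner_eq0.
  by have := supp0 k; rewrite !inE => /negbFE/eqP.
have c_gt0 : 0 < K%:R :> R by rewrite ltr0n.
have ln2_gt0 : 0 < ln (2 : R) by rewrite ln_gt0 ?ltr1n.
have : (- \sum_k xlog2 (l k)) * ln 2 <= ln K%:R.
  rewrite -sumrN mulr_suml.
  apply: le_trans (ler_sum _ (fun k _ => xlog2_ge c_gt0 (l_ge0 k))) _.
  rewrite sumrB big_split /= -mulr_suml l_sum mul1r.
  rewrite (eq_bigr (fun k => if l k != 0 then K%:R^-1 else 0)); last first.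
    by move=> k _; case: eqP.
  rewrite -big_mkcond /= sumr_const -[#|_|]/K -[_^-1 *+ K]mulr_natl.
  by rewrite mulfV ?gt_eqF // addrK.
move=> le_lnK; rewrite -(ler_pM2r ln2_gt0); apply: le_trans le_lnK _.
by rewrite mulr_natl -lnXn ?ltr0n // ler_ln ?posrE ?exprn_gt0 ?ltr0n // -natrX ler_nat.
Qed.

End EntropyBound.

Section HermitianPsd.
Variable C : numClosedFieldType.

Definition hermitian n (A : 'M[C]_n) := map_mx Num.conj A^T = A.
Definition psd n (A : 'M[C]_n) :=
  forall v : 'rV[C]_n, 0 <= (v *m A *m map_mx Num.conj v^T) 0 0.

Lemma hermitian_spectral_diagE n (A : 'M[C]_n) : hermitian A ->
  diag_mx (spectral_diag A) =
  spectralmx A *m A *m map_mx Num.conj (spectralmx A)^T.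
Proof.
move=> A_herm.
have /orthomx_spectralP A_eq : A \is normalmx by apply/normalmxP; rewrite A_herm.
have U_unit := spectral_unit A.
rewrite -invmx_unitary ?spectral_unitarymx //; move: A_eq U_unit.
set U := spectralmx A => A_eq U_unit.
by rewrite [in RHS]A_eq !mulmxA mulmxV // mul1mx mulmxK.
Qed.

Lemma mulmx_conjT_diagE n (A B : 'M[C]_n) k :
  (A *m B *m map_mx Num.conj A^T) k k =
  (row k A *m B *m map_mx Num.conj (row k A)^T) 0 0.
Proof.
rewrite !mxE; apply: eq_bigr => j _; rewrite !mxE; congr (_ * _).
by apply: eq_bigr => l _; rewrite !mxE.
Qed.

Lemma spectral_diag_ge0 n (A : 'M[C]_n) k : hermitian A -> psd A ->
  0 <= spectral_diag A 0 k.
Proof.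
move=> A_herm A_psd.
have := congr1 (fun M : 'M[C]_n => M k k) (hermitian_spectral_diagE A_herm).
by rewrite /= mxE eqxx mulr1n mulmx_conjT_diagE => ->.
Qed.

Lemma sum_spectral_diag n (A : 'M[C]_n) : hermitian A ->
  \sum_k spectral_diag A 0 k = \tr A.
Proof.
move=> A_herm; rewrite -mxtrace_diag hermitian_spectral_diagE //.
rewrite -invmx_unitary ?spectral_unitarymx //.
by rewrite mxtrace_mulC mulmxA mulVmx ?spectral_unit // mul1mx.
Qed.

Lemma card_support_le_rank_diag n (d : 'rV[C]_n) :
  (#|[pred k | d ord0 k != 0%R]| <= \rank (diag_mx d))%N.
Proof.
set K := [pred k | d ord0 k != 0%R].
pose M : 'M[C]_(#|K|, n) := \matrix_(i, j) (j == enum_val i)%:R.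
pose N : 'M[C]_(n, #|K|) := \matrix_(j, i) ((j == enum_val i)%:R / d ord0 j).
apply: (@mulmx1_min_rank _ _ _ _ _ M N); apply/matrixP => i i'; rewrite !mxE.
rewrite (bigD1 (enum_val i')) //= big1 ?addr0; last first.
  by move=> j /negbTE j_neq; rewrite !mxE j_neq mulr0n mul0r mulr0.
rewrite !mxE eqxx mulr1n mul1r (bigD1 (enum_val i)) //= big1 ?addr0; last first.
  by move=> j /negbTE j_neq; rewrite !mxE j_neq mulr0n mul0r.
rewrite !mxE !(inj_eq enum_val_inj) eqxx mul1r.
have := enum_valP i'; rewrite inE => d_neq0.
by case: eqP => [->|_]; rewrite ?mulr1n ?mulfV ?mulr0n ?mul0r.
Qed.

Lemma card_spectral_support_le_rank n (A : 'M[C]_n) : hermitian A ->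
  (#|[pred k | spectral_diag A ord0 k != 0%R]| <= \rank A)%N.
Proof.
move=> A_herm; apply: leq_trans (card_support_le_rank_diag _) _.
by rewrite hermitian_spectral_diagE // (leq_trans (mxrankM_maxl _ _)) ?mxrankM_maxr.
Qed.

Lemma spectral_diag_scaled_idem n (A : 'M[C]_n) (c : C) k :
  hermitian A -> A *m A = c *: A ->
  spectral_diag A 0 k = 0 \/ spectral_diag A 0 k = c.
Proof.
move=> A_herm A_sqr; set U := spectralmx A; set D := diag_mx (spectral_diag A).
have UtU : map_mx Num.conj U^T *m U = 1%:M.
  by rewrite -invmx_unitary ?spectral_unitarymx // mulVmx ?spectral_unit.
have D_sqr : D *m D = c *: D.
  rewrite /D (hermitian_spectral_diagE A_herm) -/U !mulmxA.
  rewrite -(mulmxA (U *m _) _ U) UtU mulmx1 -(mulmxA U A A) A_sqr.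
  by rewrite -scalemxAr -scalemxAl.
have /eqP := congr1 (fun M : 'M[C]_n => M k k) D_sqr.
rewrite /= mulmx_diag !mxE eqxx !mulr1n -subr_eq0 -mulrBl mulf_eq0 subr_eq0.
by case/orP => /eqP; [right|left].
Qed.

Lemma psd_form_delta n (A : 'M[C]_n) i j :
  ((delta_mx 0 i : 'rV_n) *m A *m map_mx Num.conj (delta_mx 0 j : 'rV_n)^T) 0 0
  = A i j.
Proof.
rewrite -rowE !mxE (bigD1 j) //= big1 ?addr0.
  by rewrite !mxE !eqxx mulr1n conjC1 mulr1.
by move=> l /negbTE l_neq; rewrite !mxE eqxx l_neq mulr0n conjC0 mulr0.
Qed.

Lemma psd_diag_ge0 n (A : 'M[C]_n) i : psd A -> 0 <= A i i.
Proof. by move/(_ (delta_mx 0 i)); rewrite psd_form_delta. Qed.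

(* The quadratic form at t e_i + e_j is 2 Re (t A_ij) + A_jj once A_ii = 0;
   choosing t a large negative multiple of conj A_ij makes it negative. *)
Lemma psd_diag_eq0_row n (A : 'M[C]_n) i j :
  hermitian A -> psd A -> A i i = 0 -> A i j = 0.
Proof.
move=> A_herm A_psd Aii0.
have Aji : A j i = (A i j)^* by rewrite -{1}A_herm !mxE.
set a := A i j in Aji *.
have form_ge0 (t : C) : 0 <= t * a + t^* * a^* + A j j.
  have := A_psd (t *: delta_mx 0 i + delta_mx 0 j).
  rewrite linearD /= map_mxD linearZ /= map_mxZ !mulmxDl !mulmxDr.
  rewrite -!scalemxAl -!scalemxAr ![(_ + _ : 'M_1) 0 0]mxE ![(_ *: _ : 'M_1) 0 0]mxE.
  by rewrite !psd_form_delta Aii0 Aji !mulr0 add0r addrA.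
have [//|a_neq0] := eqVneq a 0.
have Ajj_ge0 : 0 <= A j j := psd_diag_ge0 j A_psd.
have aa_ge0 : 0 <= a * a^* := mul_conjC_ge0 a.
set s := (A j j + 1) / (2 * (a * a^*)).
have s_real : s^* = s.
  rewrite /s rmorphM /= fmorphV /= rmorphM /= rmorphD /= rmorph1 /= rmorph_nat.
  by rewrite (conj_Creal (ger0_real Ajj_ge0)) (conj_Creal (ger0_real aa_ge0)).
have := form_ge0 (- s * a^*).
rewrite rmorphM /= rmorphN /= conjCK s_real.
have -> : - s * a^* * a + - s * a * a^* + A j j = -1.
  by rewrite /s; field; rewrite conjC_eq0 a_neq0.
by move=> /le_lt_trans/(_ (@ltrN10 C)); rewrite ltxx.
Qed.

End HermitianPsd.

Lemma Re_sum (R : rcfType) (I : finType) (F : I -> R[i]) :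
  complex.Re (\sum_k F k) = \sum_k complex.Re (F k).
Proof.
by apply: (big_morph _ _ (erefl (complex.Re (0 : R[i])))) => -[? ?] [? ?].
Qed.

Lemma entropy_le_log2_rank (R : realType) n (A : 'M[R[i]]_n) (N : nat) :
  is_density A -> (\rank A <= 2 ^ N)%N -> vn_entropy A <= N%:R.
Proof.
case=> A_herm A_psd A_tr rank_le; apply: entropy_le_log2_support.
- by move=> k; have := spectral_diag_ge0 k A_herm A_psd; rewrite lecE => /andP[].
- by rewrite -Re_sum sum_spectral_diag // A_tr.
- apply: leq_trans (leq_trans (card_spectral_support_le_rank A_herm) rank_le).
  by apply: subset_leq_card; apply/subsetP => k; rewrite !inE; apply: contra => /eqP ->.
Qed.

Section GhzSupport.
Variable R : realType.
Variables m p : nat.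
Hypothesis m_ge3 : (3 <= m)%N.
Local Notation C := (R[i]).
Local Notation config := (config m p).
Local Notation n := (qdim m p).

Definition is_ghz (x : config) : bool :=
  [forall j, forall a, forall b, x a j == x b j].

Lemma is_ghzP (x : config) : reflect (forall j a b, x a j = x b j) (is_ghz x).
Proof.
apply: (iffP forallP) => [x_ghz j a b|x_ghz j].
  by have /forallP/(_ a)/forallP/(_ b)/eqP := x_ghz j.
by apply/forallP => a; apply/forallP => b; apply/eqP.
Qed.

Lemma is_ghzPn (x : config) : ~~ is_ghz x -> exists j a b, x a j != x b j.
Proof.
rewrite negb_forall => /existsP[j]; rewrite negb_forall => /existsP[a].
by rewrite negb_forall => /existsP[b]; exists j, a, b.
Qed.

Lemma entry_ghz_proj (x y : config) :
  entry (ghz_proj R m p) x y = ghz_amp R x * Num.conj (ghz_amp R y).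
Proof. by rewrite /entry mxE !enum_rankK. Qed.

Lemma ghz_amp_eq0 (x : config) : ~~ is_ghz x -> ghz_amp R x = 0.
Proof. by rewrite /ghz_amp /is_ghz => /negbTE ->. Qed.

Lemma exists_third_party (a b : 'I_m) : exists c : 'I_m, (c != a) && (c != b).
Proof.
have : (0 < #|~: [set a; b]|)%N.
  have := cardsC [set a; b]; rewrite card_ord.
  have : (#|[set a; b]| <= 2)%N by rewrite cards2; case: (a != b).
  lia.
by case/card_gt0P => c; rewrite !inE negb_or; exists c.
Qed.

Lemma setpartyE (x : config) a z b :
  setparty x a z b = if b == a then z else x b.
Proof. exact: ffunE. Qed.

Lemma setparty_id (x : config) a : setparty x a (x a) = x.
Proof. by apply/ffunP => b; rewrite setpartyE; case: eqP => [->|]. Qed.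

Lemma Gamma_diag_eq0 (rho : 'M[C]_n) (x : config) :
  Gamma rho -> ~~ is_ghz x -> entry rho x x = 0.
Proof.
case=> [[_ rho_psd _] marginals] /is_ghzPn[j [a [b x_ab]]].
have [c /andP[c_neq_a c_neq_b]] := exists_third_party a b.
have := marginals c x x; rewrite /ptrace_party [RHS]big1; last first.
  move=> z _; rewrite entry_ghz_proj ghz_amp_eq0 ?mul0r //.
  apply/is_ghzP => /(_ j a b); rewrite !setpartyE eq_sym (negbTE c_neq_a).
  by rewrite eq_sym (negbTE c_neq_b); apply/eqP.
move/psumr_eq0P => diag_eq0; rewrite -[in entry _ x x](setparty_id x c).
by apply: diag_eq0 => // z _; apply: psd_diag_ge0.
Qed.

Lemma Gamma_row_eq0 (rho : 'M[C]_n) (x y : config) :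
  Gamma rho -> ~~ is_ghz x -> entry rho x y = 0.
Proof.
move=> rho_G /(Gamma_diag_eq0 rho_G); case: rho_G => [[rho_herm rho_psd _] _].
exact: psd_diag_eq0_row.
Qed.

Lemma Gamma_col_eq0 (rho : 'M[C]_n) (x y : config) :
  Gamma rho -> ~~ is_ghz y -> entry rho x y = 0.
Proof.
move=> rho_G /(Gamma_row_eq0 x rho_G) yx_eq0; case: rho_G => [[rho_herm _ _] _].
by move: yx_eq0; rewrite /entry -{2}rho_herm !mxE => ->; rewrite conjC0.
Qed.

Definition ghz_config (z : {ffun 'I_p -> bool}) : config := [ffun _ => z].

Definition party0 : 'I_m := Ordinal (leq_trans (isT : (1 <= 3)%N) m_ge3).

Lemma ghz_config_is_ghz z : is_ghz (ghz_config z).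
Proof. by apply/is_ghzP => j a b; rewrite !ffunE. Qed.

Lemma ghz_configE (x : config) : is_ghz x -> x = ghz_config (x party0).
Proof.
by move/is_ghzP => x_ghz; apply/ffunP => b; apply/ffunP => j; rewrite ffunE.
Qed.

Lemma ghz_config_inj : injective ghz_config.
Proof. by move=> z1 z2 /(congr1 (fun x : config => x party0)); rewrite !ffunE. Qed.

Lemma card_qubits : #|{ffun 'I_p -> bool}| = (2 ^ p)%N.
Proof. by rewrite card_ffun card_bool card_ord. Qed.

(* rho factors through the 2^p columns indexed by the GHZ strings. *)
Lemma Gamma_rank_le (rho : 'M[C]_n) : Gamma rho -> (\rank rho <= 2 ^ p)%N.
Proof.
move=> rho_G; pose T := {ffun 'I_p -> bool}.
pose A : 'M[C]_(n, #|T|) := \matrix_(i, t) rho i (enum_rank (ghz_config (enum_val t))).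
pose B : 'M[C]_(#|T|, n) :=
  \matrix_(t, j) (enum_val (j : 'I_#|config|) == ghz_config (enum_val t))%:R.
suff -> : rho = A *m B by rewrite -card_qubits mulmx_max_rank.
apply/matrixP => i j; rewrite mxE.
have [/ghz_configE x_eq|x_nghz] := boolP (is_ghz (enum_val (j : 'I_#|config|))).
  set z := _ party0 in x_eq.
  rewrite (bigD1 (enum_rank z)) //= big1 ?addr0.
    by rewrite !mxE enum_rankK -x_eq eqxx mulr1 enum_valK.
  move=> t t_neq; rewrite !mxE x_eq (inj_eq ghz_config_inj).
  have /negbTE -> : z != enum_val t by apply: contra t_neq => /eqP ->; rewrite enum_valK.
  by rewrite mulr0.
rewrite big1.
  have := Gamma_col_eq0 (enum_val (i : 'I_#|config|)) rho_G x_nghz.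
  by rewrite /entry !enum_valK.
move=> t _; rewrite !mxE; case: eqP => [x_eq|_]; last by rewrite mulr0.
by move: x_nghz; rewrite x_eq ghz_config_is_ghz.
Qed.

Lemma Gamma_entropy_le (rho : 'M[C]_n) : Gamma rho -> vn_entropy rho <= p%:R.
Proof.
by move=> rho_G; apply: entropy_le_log2_rank (Gamma_rank_le rho_G); case: rho_G.
Qed.

Local Open Scope complex_scope.

Definition ghz_weight : R := ((2 ^ p)%:R)^-1.

Lemma ghz_weight_gt0 : 0 < ghz_weight.
Proof. by rewrite invr_gt0 ltr0n expn_gt0. Qed.

Lemma ghz_amp_sqr :
  (Num.sqrt (2 : R))^-1 ^+ p * (Num.sqrt (2 : R))^-1 ^+ p = ghz_weight.
Proof.
by rewrite -exprMn -invfM -expr2 sqr_sqrtr ?ler0n // exprVn /ghz_weight natrX.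
Qed.

Definition dephased_ghz : 'M[C]_n :=
  diag_mx (\row_j (if is_ghz (enum_val (j : 'I_#|config|)) then ghz_weight%:C else 0)).

Lemma entry_dephased_ghz (x y : config) :
  entry dephased_ghz x y = (if is_ghz x then ghz_weight%:C else 0) *+ (x == y).
Proof. by rewrite /entry !mxE enum_rankK (inj_eq enum_rank_inj). Qed.

Lemma sum_ghz (F : config -> C) :
  \sum_(x | is_ghz x) F x = \sum_(z : {ffun 'I_p -> bool}) F (ghz_config z).
Proof.
rewrite (reindex_onto ghz_config (fun x : config => x party0)) /=; last first.
  by move=> x /ghz_configE.
by apply: eq_bigl => z; rewrite ghz_config_is_ghz ffunE eqxx.
Qed.

Lemma dephased_ghz_density : is_density dephased_ghz.
Proof.
split.
- rewrite tr_diag_mx map_diag_mx; congr diag_mx; apply/rowP => j; rewrite !mxE.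
  by case: ifP => _; [exact: conjc_real | exact: conjC0].
- move=> v; rewrite mul_mx_diag mxE sumr_ge0 // => j _; rewrite !mxE.
  case: ifP => _; last by rewrite mulr0 mul0r.
  by rewrite mulrAC mulr_ge0 ?mul_conjC_ge0 // ler0c ltW ?ghz_weight_gt0.
- rewrite mxtrace_diag.
  under eq_bigr do rewrite mxE.
  rewrite -(big_enum_val (fun x => if is_ghz x then ghz_weight%:C else 0)).
  rewrite -big_mkcond /= sum_ghz sumr_const card_qubits -rmorphMn /=.
  by rewrite -mulr_natl mulfV ?pnatr_eq0 ?expn_eq0.
Qed.

(* Both partial traces pair z with itself only on GHZ strings, where the GHZ
   amplitudes multiply to the dephased weight. *)
Lemma dephased_ghz_marginals (a : 'I_m) (x y : config) :
  ptrace_party a dephased_ghz x y = ptrace_party a (ghz_proj R m p) x y.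
Proof.
apply: eq_bigr => z _; rewrite entry_dephased_ghz entry_ghz_proj /ghz_amp.
set u := setparty x a z; set v := setparty y a z; rewrite -/(is_ghz u) -/(is_ghz v).
have [u_ghz|_] := boolP (is_ghz u); last by rewrite mul0r mul0rn.
have [v_ghz|v_nghz] := boolP (is_ghz v); last first.
  rewrite (_ : u == v = false) ?mulr0n ?conjC0 ?mulr0 //.
  by apply: contraNF v_nghz => /eqP <-.
have party_a (w : config) : is_ghz w -> w party0 = w a.
  by move/is_ghzP => w_ghz; apply/ffunP => j.
rewrite (_ : u == v) ?mulr1n; last first.
  by rewrite (ghz_configE u_ghz) (ghz_configE v_ghz) !party_a // !setpartyE eqxx.
set s := (Num.sqrt (2 : R))^-1 ^+ p.
have -> : Num.conj s%:C = s%:C := conjc_real s.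
by rewrite -rmorphM /= ghz_amp_sqr.
Qed.

Lemma Gamma_dephased_ghz : Gamma dephased_ghz.
Proof. exact: (conj dephased_ghz_density dephased_ghz_marginals). Qed.

Lemma dephased_ghz_sqr :
  dephased_ghz *m dephased_ghz = ghz_weight%:C *: dephased_ghz.
Proof.
rewrite mulmx_diag; apply/matrixP => i j; rewrite !mxE.
by case: (i == j); case: ifP => _; rewrite ?mulr0 ?mulr1n ?mulr0n.
Qed.

Lemma dephased_ghz_entropy : vn_entropy dephased_ghz = p%:R.
Proof.
have [rho_herm _ rho_tr] := dephased_ghz_density.
have ln2_gt0 : 0 < ln (2 : R) by rewrite ln_gt0 ?ltr1n.
rewrite /vn_entropy (eq_bigr (fun k =>
  complex.Re (spectral_diag dephased_ghz 0 k) * (ln ghz_weight / ln 2))); last first.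
  move=> k _; case: (spectral_diag_scaled_idem k rho_herm dephased_ghz_sqr) => ->;
    rewrite /xlog2 /=.
    by rewrite eqxx mul0r.
  by rewrite gt_eqF ?ghz_weight_gt0 // -mulrA.
rewrite -mulr_suml -Re_sum sum_spectral_diag // rho_tr /= mul1r.
rewrite lnV ?posrE ?ltr0n ?expn_gt0 // natrX lnXn ?ltr0n //.
rewrite -[ln _ *+ p]mulr_natr.
by field; rewrite gt_eqF.
Qed.

End GhzSupport.

Theorem mainTheorem9 (R : realType) (m p : nat) (hm : (3 <= m)%N) :
  (exists rho : 'M[R[i]]_(qdim m p), Gamma rho /\ vn_entropy rho = p%:R) /\
  (forall rho : 'M[R[i]]_(qdim m p), Gamma rho -> vn_entropy rho <= p%:R).
Proof.
split; last exact: Gamma_entropy_le.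
exists (dephased_ghz R m p).
by split; [exact: Gamma_dephased_ghz | exact: dephased_ghz_entropy].
Qed.
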